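(* Let $C\neq\mathbb{F}_q^n$ be a $q$-ary linear code with minimum distance $d=1$ and covering radius $\rho$. Then $C$ can be obtained, up to a permutation of coordinates, by applying the $q$-repeated code construction some number of times to a linear code $D$ which has minimum distance greater than one and covering radius $\rho$. Moreover, $C$ is completely regular if and only if $D$ is completely regular.
   Context: The $q$-repeated code of $D\subseteq\mathbb{F}_q^m$ is $\{(a,x_1,\dots,x_m): a\in\mathbb{F}_q,(x_1,\dots,x_m)\in D\}\subseteq\mathbb{F}_q^{m+1}$. Covering radius $\rho=\max_{\bf v}\min_{{\bf x}\in C}d({\bf v},{\bf x})$ (Hamming distance). A code is completely regular if for every vector ${\bf x}$, with $t=d({\bf x},C)$, the number of codewords at distance $i$ from ${\bf x}$ depends only on $t$ and $i$. *)

(* Codes over a finite field F (= F_q, q = #|F|). *)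
From mathcomp Require Import all_boot all_order all_algebra all_fingroup.
Set Implicit Arguments. Unset Strict Implicit. Unset Printing Implicit Defensive.
Import GRing.Theory.
Local Open Scope ring_scope.

Section Codes.
Variable F : finFieldType.

Definition hdist (n : nat) (x y : 'rV[F]_n) : nat :=
  #|[set i : 'I_n | x 0 i != y 0 i]|.

Definition is_linear_code (n : nat) (C : {set 'rV[F]_n}) : bool :=
  (0 \in C) && [forall x in C, forall y in C, forall a : F, a *: x + y \in C].

Definition has_min_dist (n : nat) (C : {set 'rV[F]_n}) (d : nat) : Prop :=
  (exists x, exists y, [/\ x \in C, y \in C, x != y & hdist x y = d]) /\
  (forall x y, x \in C -> y \in C -> x != y -> (d <= hdist x y)%N).

(* Minimum distance greater than one (vacuous for the zero code,
   whose minimum distance is conventionally infinite). *)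
Definition min_dist_gt1 (n : nat) (C : {set 'rV[F]_n}) : Prop :=
  forall x y, x \in C -> y \in C -> x != y -> (1 < hdist x y)%N.

Definition dist_to_code (n : nat) (v : 'rV[F]_n) (C : {set 'rV[F]_n}) : nat :=
  \big[minn/n]_(x in C) hdist v x.

Definition cov_rad (n : nat) (C : {set 'rV[F]_n}) : nat :=
  \max_(v : 'rV[F]_n) dist_to_code v C.

Definition completely_regular (n : nat) (C : {set 'rV[F]_n}) : Prop :=
  forall x y : 'rV[F]_n, dist_to_code x C = dist_to_code y C ->
    forall i : nat,
      #|[set c in C | hdist x c == i]| = #|[set c in C | hdist y c == i]|.

Definition rep_code (m : nat) (D : {set 'rV[F]_m}) : {set 'rV[F]_(1 + m)} :=
  [set row_mx a x | a in [set: 'rV[F]_1], x in D].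

Fixpoint rep_iter (m k : nat) (D : {set 'rV[F]_m}) : {set 'rV[F]_(k + m)} :=
  match k return {set 'rV[F]_(k + m)} with
  | 0 => D
  | k'.+1 => rep_code (rep_iter k' D)
  end.

End Codes.

(* If a linear code C contains a unit vector e_i, then C + F e_i = C, so up to
   moving coordinate i to the front C is the repeated code of its puncturing at
   i, again a linear code.  A linear code with minimum distance one contains a
   unit vector, so stripping coordinates this way ends with a code D whose
   minimum distance exceeds one.
   The free coordinate of a repeated code can always be matched, so repetition
   preserves distances to the code and hence the covering radius.  Writing
   N_j(v) for the number of codewords of X at distance j from v, the repeated
   code has N_i(v) + (q - 1) N_(i-1)(v) codewords at distance i from (a, v), for
   every a; these counts determine each other by induction on i, which carries
   complete regularity both ways.  Coordinate permutations are isometries. *)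

From mathcomp Require Import all_boot all_order all_algebra all_fingroup.
Set Implicit Arguments. Unset Strict Implicit. Unset Printing Implicit Defensive.
Import Order.TTheory GRing.Theory.
Local Open Scope ring_scope.

Section HammingDistance.
Variable F : finFieldType.

Lemma hdistE n (x y : 'rV[F]_n) : hdist x y = (\sum_i (x 0%R i != y 0%R i))%N.
Proof. by rewrite /hdist -sum1_card big_mkcond; apply: eq_bigr => i _; rewrite inE. Qed.

Lemma hdist_le n (x y : 'rV[F]_n) : (hdist x y <= n)%N.
Proof. by rewrite /hdist -[X in (_ <= X)%N]card_ord max_card. Qed.

Lemma hdistxx n (x : 'rV[F]_n) : hdist x x = 0%N.
Proof. by rewrite hdistE big1 // => i _; rewrite eqxx. Qed.

Lemma hdist_eq0 n (x y : 'rV[F]_n) : (hdist x y == 0%N) = (x == y).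
Proof.
rewrite cards_eq0; apply/eqP/eqP => [xy|->]; last by apply/setP => i; rewrite !inE eqxx.
by apply/rowP => i; apply/eqP; have := in_set0 i; rewrite -xy inE => /negbFE.
Qed.

Lemma hdist_row_mx m n (a b : 'rV[F]_m) (x y : 'rV[F]_n) :
  hdist (row_mx a x) (row_mx b y) = (hdist a b + hdist x y)%N.
Proof.
rewrite !hdistE big_split_ord /=.
by congr (_ + _)%N; apply: eq_bigr => i _; rewrite ?row_mxEl ?row_mxEr.
Qed.

Lemma hdist1 (a b : 'rV[F]_1) : hdist a b = (a != b).
Proof.
rewrite hdistE big_ord1; congr (nat_of_bool (~~ _)); apply/eqP/eqP => [ab|-> //].
by apply/rowP => i; rewrite !ord1.
Qed.

Lemma hdist_col_perm n (s : 'S_n) (x y : 'rV[F]_n) :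
  hdist (col_perm s x) (col_perm s y) = hdist x y.
Proof.
by rewrite !hdistE [RHS](reindex_inj (@perm_inj _ s)); apply: eq_bigr => i; rewrite !mxE.
Qed.

End HammingDistance.

Section DistanceToCode.
Variable F : finFieldType.

Lemma dist_to_code_le n (C : {set 'rV[F]_n}) v c :
  c \in C -> (dist_to_code v C <= hdist v c)%N.
Proof.
by move=> Cc; rewrite /dist_to_code -minEnat; exact: (@bigmin_le_cond _ nat _ n c (mem C)).
Qed.

Lemma dist_to_code_attained n (C : {set 'rV[F]_n}) v :
  C != set0 -> exists2 c, c \in C & dist_to_code v C = hdist v c.
Proof.
case/set0Pn => c0 Cc0; rewrite /dist_to_code -minEnat.
by have [c Cc ->] := @eq_bigmin _ nat _ _ _ (mem C) _ Cc0 (fun c _ => hdist_le v c); exists c.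
Qed.

Lemma dist_to_code_eq n (C : {set 'rV[F]_n}) v d :
  (forall c, c \in C -> d <= hdist v c)%N ->
  (exists2 c, c \in C & hdist v c = d) -> dist_to_code v C = d.
Proof.
move=> lb [c Cc vc]; have C0 : C != set0 by apply/set0Pn; exists c.
have [c' Cc' vc'] := dist_to_code_attained v C0.
by apply/eqP; rewrite eqn_leq -{1}vc dist_to_code_le //= vc' lb.
Qed.

Lemma eq_cov_rad m n (C : {set 'rV[F]_m}) (C' : {set 'rV[F]_n}) :
  (forall v, exists w, dist_to_code w C' = dist_to_code v C) ->
  (forall w, exists v, dist_to_code w C' = dist_to_code v C) ->
  cov_rad C' = cov_rad C.
Proof.
move=> toC' toC; apply/eqP; rewrite eqn_leq; apply/andP; split.
  by apply/bigmax_leqP => w _; have [v ->] := toC w; apply: leq_bigmax.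
by apply/bigmax_leqP => v _; have [w <-] := toC' v; apply: leq_bigmax.
Qed.

Definition dist_count n (C : {set 'rV[F]_n}) x i := #|[set c in C | hdist x c == i]|.

End DistanceToCode.

Section Isometry.
Variables (F : finFieldType) (n : nat) (phi : 'rV[F]_n -> 'rV[F]_n).
Hypotheses (phi_bij : bijective phi)
  (phi_iso : forall x y, hdist (phi x) (phi y) = hdist x y).

Lemma dist_to_code_isometry (C : {set 'rV[F]_n}) v : C != set0 ->
  dist_to_code (phi v) (phi @: C) = dist_to_code v C.
Proof.
move=> C0; apply: dist_to_code_eq => [_ /imsetP [c Cc ->]|].
  by rewrite phi_iso dist_to_code_le.
by have [c Cc ->] := dist_to_code_attained v C0; exists (phi c); rewrite ?imset_f.
Qed.

Lemma cov_rad_isometry (C : {set 'rV[F]_n}) : C != set0 ->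
  cov_rad (phi @: C) = cov_rad C.
Proof.
move=> C0; have [psi phiK psiK] := phi_bij.
apply: eq_cov_rad => [v|w]; first by exists (phi v); rewrite dist_to_code_isometry.
by exists (psi w); rewrite -{1}(psiK w) dist_to_code_isometry.
Qed.

Lemma dist_count_isometry (C : {set 'rV[F]_n}) x i :
  dist_count (phi @: C) (phi x) i = dist_count C x i.
Proof.
rewrite /dist_count -[RHS](card_imset _ (bij_inj phi_bij)); apply: eq_card => z.
rewrite !inE; apply/andP/imsetP => [[/imsetP [c Cc ->]]|[c]].
  by rewrite phi_iso => xc; exists c; rewrite // inE Cc.
by rewrite inE => /andP [Cc xc] ->; rewrite imset_f // phi_iso.
Qed.

Lemma completely_regular_isometry (C : {set 'rV[F]_n}) : C != set0 ->
  completely_regular (phi @: C) <-> completely_regular C.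
Proof.
move=> C0; have [psi phiK psiK] := phi_bij.
split => CR x y xy i; rewrite -!/(dist_count _ _ i).
  rewrite -!(dist_count_isometry C _ i); apply: CR.
  by rewrite !dist_to_code_isometry.
rewrite -(psiK x) -(psiK y) !dist_count_isometry; apply: CR.
by rewrite -!(dist_to_code_isometry _ C0) !psiK.
Qed.

End Isometry.

Section RepeatedCode.
Variable F : finFieldType.

Lemma mem_rep_code m (X : {set 'rV[F]_m}) z : (z \in rep_code X) = (rsubmx z \in X).
Proof.
apply/imset2P/idP => [[a x _ Xx ->]|Xz]; first by rewrite row_mxKr.
by exists (lsubmx z) (rsubmx z); rewrite ?inE ?hsubmxK.
Qed.

Lemma row_mx_rep_code m (X : {set 'rV[F]_m}) a x : (row_mx a x \in rep_code X) = (x \in X).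
Proof. by rewrite mem_rep_code row_mxKr. Qed.

Lemma rep_code_neq0 m (X : {set 'rV[F]_m}) : X != set0 -> rep_code X != set0.
Proof.
by case/set0Pn => x Xx; apply/set0Pn; exists (row_mx 0 x); rewrite row_mx_rep_code.
Qed.

Lemma dist_to_code_rep m (X : {set 'rV[F]_m}) a v : X != set0 ->
  dist_to_code (row_mx a v) (rep_code X) = dist_to_code v X.
Proof.
move=> X0; apply: dist_to_code_eq => [z|].
  rewrite mem_rep_code -{2}(hsubmxK z) hdist_row_mx => Xz.
  exact: leq_trans (dist_to_code_le v Xz) (leq_addl _ _).
have [c Xc ->] := dist_to_code_attained v X0.
by exists (row_mx a c); rewrite ?row_mx_rep_code // hdist_row_mx hdistxx.
Qed.

Lemma cov_rad_rep m (X : {set 'rV[F]_m}) : X != set0 -> cov_rad (rep_code X) = cov_rad X.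
Proof.
move=> X0; apply: eq_cov_rad => [v|w].
  by exists (row_mx 0 v); rewrite dist_to_code_rep.
by exists (rsubmx w); rewrite -{1}(hsubmxK w) dist_to_code_rep.
Qed.

(* The first coordinate [b] of a codeword is free: [b = a] contributes
   [dist_count X v i], and each of the [#|F| - 1] other values one step more. *)
Lemma dist_count_rep m (X : {set 'rV[F]_m}) a v i :
  dist_count (rep_code X) (row_mx a v) i =
  (dist_count X v i + #|F|.-1 * (if i is j.+1 then dist_count X v j else 0))%N.
Proof.
have split_bij : bijective (fun p : 'rV[F]_1 * 'rV[F]_m => row_mx p.1 p.2).
  exists (fun z => (lsubmx z, rsubmx z)) => [[b c]|z];
  by rewrite ?row_mxKl ?row_mxKr ?hsubmxK.
transitivity (\sum_(b : 'rV[F]_1) #|[set c in X | (hdist a b + hdist v c)%N == i]|)%N.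
  rewrite /dist_count -sum1_card big_mkcond (reindex _ (onW_bij _ split_bij)) /=.
  rewrite -[RHS](eq_bigr _ (fun b _ => sum1_card _)).
  under [RHS]eq_bigr do rewrite big_mkcond.
  rewrite pair_bigA /=; apply: eq_bigr => -[b c] _ /=.
  by rewrite !inE row_mx_rep_code hdist_row_mx.
rewrite (bigD1 a) //= hdistxx; congr (_ + _)%N.
rewrite (eq_bigr (fun _ => if i is j.+1 then dist_count X v j else 0%N)) => [|b ba].
  by rewrite sum_nat_const cardC1 card_mx expn1.
rewrite hdist1 eq_sym ba /dist_count; case: i => [|j].
  by apply/eqP; rewrite cards_eq0; apply/eqP/setP => c; rewrite !inE andbF.
by apply: eq_card => c; rewrite !inE.
Qed.

(* The counts of [rep_code X] at [row_mx 0 v] determine those of [X] at [v]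
   by induction on the distance. *)
Lemma completely_regular_rep m (X : {set 'rV[F]_m}) : X != set0 ->
  completely_regular (rep_code X) <-> completely_regular X.
Proof.
move=> X0; split => CR x y xy.
  have := CR (row_mx 0 x) (row_mx 0 y); rewrite !dist_to_code_rep // => /(_ xy) CR0.
  suff CRxy i : dist_count X x i = dist_count X y i by [].
  elim: i => [|j IHj].
    by have := CR0 0%N; rewrite -!/(dist_count _ _ _) !dist_count_rep !muln0 !addn0.
  by have := CR0 j.+1; rewrite -!/(dist_count _ _ _) !dist_count_rep IHj => /addIn.
rewrite -(hsubmxK x) -(hsubmxK y) !dist_to_code_rep // in xy *.
move/CR: xy => CRxy i.
rewrite -!/(dist_count _ _ i) !dist_count_rep /dist_count.
by case: i => [|j]; rewrite !CRxy.
Qed.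

Lemma rep_iter_neq0 m (D : {set 'rV[F]_m}) k : D != set0 -> rep_iter k D != set0.
Proof. by move=> D0; elim: k => //= k; apply: rep_code_neq0. Qed.

Lemma cov_rad_rep_iter m (D : {set 'rV[F]_m}) k : D != set0 ->
  cov_rad (rep_iter k D) = cov_rad D.
Proof. by move=> D0; elim: k => //= k <-; rewrite cov_rad_rep // rep_iter_neq0. Qed.

Lemma completely_regular_rep_iter m (D : {set 'rV[F]_m}) k : D != set0 ->
  completely_regular (rep_iter k D) <-> completely_regular D.
Proof.
move=> D0; elim: k => //= k IHk.
exact: iff_trans (completely_regular_rep (rep_iter_neq0 k D0)) IHk.
Qed.

End RepeatedCode.

Section LinearCodes.
Variable F : finFieldType.

Lemma linear_code0 n (C : {set 'rV[F]_n}) : is_linear_code C -> 0 \in C.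
Proof. by case/andP. Qed.

Lemma linear_code_lin n (C : {set 'rV[F]_n}) a x y : is_linear_code C ->
  x \in C -> y \in C -> a *: x + y \in C.
Proof. by case/andP => _ /forall_inP lin Cx /(forall_inP (lin x Cx)) /forallP. Qed.

Lemma linear_code_col' n (C : {set 'rV[F]_n.+1}) i : is_linear_code C ->
  is_linear_code (col' i @: C).
Proof.
move=> linC; apply/andP; split.
  apply/imsetP; exists 0; first exact: linear_code0.
  by apply/rowP => j; rewrite !mxE.
apply/forall_inP => _ /imsetP [x Cx ->]; apply/forall_inP => _ /imsetP [y Cy ->].
apply/forallP => a; apply/imsetP; exists (a *: x + y); first exact: linear_code_lin.
by apply/rowP => j; rewrite !mxE.
Qed.

(* Two codewords at distance one differ by a multiple of a unit vector. *)
Lemma linear_code_delta n (C : {set 'rV[F]_n}) x y : is_linear_code C ->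
  x \in C -> y \in C -> hdist x y = 1%N -> exists i, delta_mx 0 i \in C.
Proof.
move=> linC Cx Cy /eqP /cards1P [i xy_i]; exists i.
have xyE j : (x 0 j != y 0 j) = (j == i) by rewrite -[RHS]in_set1 -xy_i inE.
have xy_i0 : x 0 i - y 0 i != 0 by rewrite subr_eq0 xyE.
suff -> : delta_mx 0 i = (x 0 i - y 0 i)^-1 *: ((-1) *: y + x) + 0.
  by rewrite !linear_code_lin ?linear_code0.
apply/rowP => j; rewrite !mxE addr0 mulN1r addrC eqxx /=.
have [->|ji] := eqVneq j i; first by rewrite mulVf.
by move/negbTE: ji; rewrite -xyE => /negbFE/eqP ->; rewrite subrr mulr0.
Qed.

Lemma linear_code_min_dist_gt1 n (C : {set 'rV[F]_n}) : is_linear_code C ->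
  (forall i, delta_mx 0 i \notin C) -> min_dist_gt1 C.
Proof.
move=> linC noDelta x y Cx Cy xy; rewrite ltnNge; apply/negP => xy_le1.
have [|i] := linear_code_delta linC Cx Cy; last by rewrite (negbTE (noDelta i)).
by apply/eqP; rewrite eqn_leq xy_le1 lt0n hdist_eq0.
Qed.

(* Adding a multiple of [delta_mx 0 i] adjusts coordinate [i] freely. *)
Lemma mem_linear_code_col' n (C : {set 'rV[F]_n.+1}) i z : is_linear_code C ->
  delta_mx 0 i \in C -> (z \in C) = (col' i z \in col' i @: C).
Proof.
move=> linC Ci; apply/idP/imsetP => [Cz|[y Cy zy]]; first by exists z.
suff -> : z = (z 0 i - y 0 i) *: delta_mx 0 i + y by apply: linear_code_lin.
apply/rowP => j; rewrite !mxE; case: (unliftP i j) => [j'|] ->.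
  rewrite eq_sym (negbTE (neq_lift _ _)) andbF mulr0 add0r.
  by have := congr1 (fun w : 'rV_n => w 0 j') zy; rewrite !mxE.
by rewrite !eqxx mulr1 subrK.
Qed.

End LinearCodes.

Section Decomposition.
Variable F : finFieldType.

Definition extend_at n N (i : 'I_n.+1) (g : 'I_n -> 'I_N) (j : 'I_n.+1) : 'I_(1 + N) :=
  if unlift i j is Some j' then rshift 1 (g j') else lshift N ord0.

Lemma extend_at_inj n N (i : 'I_n.+1) (g : 'I_n -> 'I_N) :
  injective g -> injective (extend_at i g).
Proof.
move=> g_inj j1 j2; rewrite /extend_at.
case: (unliftP i j1) => [j1'|] ->; case: (unliftP i j2) => [j2'|] -> //.
by move/rshift_inj/g_inj ->.
Qed.

Lemma mem_colsub_extend_at n N (i : 'I_n.+1) (g : 'I_n -> 'I_N) (X : {set 'rV[F]_N}) z :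
  (z \in colsub (extend_at i g) @: rep_code X) = (col' i z \in colsub g @: X).
Proof.
apply/imsetP/imsetP => [[x Xx ->]|[y Xy zy]].
  exists (rsubmx x); first by rewrite -mem_rep_code.
  by apply/rowP => j; rewrite !mxE /extend_at liftK.
exists (row_mx (const_mx (z 0 i)) y); first by rewrite row_mx_rep_code.
apply/rowP => j; rewrite [RHS]mxE /extend_at; case: (unliftP i j) => [j'|] ->.
  by rewrite row_mxEr; have := congr1 (fun w : 'rV_n => w 0 j') zy; rewrite !mxE.
by rewrite row_mxEl mxE.
Qed.

Lemma linear_code_rep_decomposition n (C : {set 'rV[F]_n}) : is_linear_code C ->
  exists k m (D : {set 'rV[F]_m}) (e : (k + m = n)%N) (g : 'I_n -> 'I_(k + m)),
    [/\ injective g, is_linear_code D, min_dist_gt1 D & C = colsub g @: rep_iter k D].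
Proof.
elim: n C => [|n IHn] C linC;
  have [i Ci|noDelta] := pickP [pred i | delta_mx 0 i \in C]; first by case: i Ci => -[].
2: {
  have [k [m [D [e [g [g_inj linD D1 CiE]]]]]] := IHn _ (linear_code_col' i linC).
  exists k.+1, m, D, (congr1 S e), (extend_at i g); split => //; first exact: extend_at_inj.
  by apply/setP => z; rewrite mem_colsub_extend_at -CiE -mem_linear_code_col'. }
all: exists 0%N, _, C, erefl, id; rewrite /= (eq_imset _ (@mxsub_id _ _ _)) imset_id.
all: by split => //; apply: (linear_code_min_dist_gt1 linC) => i; apply/negbT/noDelta.
Qed.

End Decomposition.

Lemma col_perm_bij {R : Type} {m n : nat} (s : 'S_n) : bijective (@col_perm R m n s).
Proof. by exists (col_perm s^-1) => x; rewrite -col_permM (mulVg, mulgV) col_perm1. Qed.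

Theorem corollary2p4 (F : finFieldType) (n : nat) (C : {set 'rV[F]_n})
    (rho : nat) :
  is_linear_code C -> C != [set: 'rV[F]_n] ->
  has_min_dist C 1 -> cov_rad C = rho ->
  exists (k m : nat) (D : {set 'rV[F]_m}) (e : (k + m = n)%N) (s : 'S_n),
    [/\ is_linear_code D, min_dist_gt1 D, cov_rad D = rho,
        C = [set col_perm s (castmx (erefl 1%N, e) x) | x in rep_iter k D]
      & (completely_regular C <-> completely_regular D)].
Proof.
move=> linC _ _ <-.
have [k [m [D [e [g [g_inj linD D1 ->]]]]]] := linear_code_rep_decomposition linC.
subst n; set s := perm g_inj.
have D0 : D != set0 by apply/set0Pn; exists 0; apply: linear_code0.
have kD0 := rep_iter_neq0 k D0.
have -> : colsub g @: rep_iter k D = col_perm s @: rep_iter k D.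
  by apply: eq_imset => x; apply/rowP => j; rewrite !mxE permE.
exists k, m, D, erefl, s; split => //.
- by rewrite (cov_rad_isometry (col_perm_bij s) (hdist_col_perm s)) // cov_rad_rep_iter.
- apply: iff_trans (completely_regular_rep_iter k D0).
  exact (completely_regular_isometry (col_perm_bij s) (hdist_col_perm s) kD0).
Qed.
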